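(* Assume that for all $\emptyset\subsetneq u\subsetneq[1:p]$ we have estimators $\widehat W_u$ that converge to $W_u$ in probability (resp. almost surely) when $N_u\to+\infty$, where $\kappa N_u$ is the cost of $\widehat W_u$. If we use the subset $W$-aggregation procedure with $N_u=N_u^*:=\mathrm{Round}\big(N_{tot}\kappa^{-1}\binom{p}{|u|}^{-1}(p-1)^{-1}\big)$ for $\emptyset\subsetneq u\subsetneq[1:p]$ ($\mathrm{Round}$ = nearest integer), then the estimators of the Shapley effects converge to the Shapley effects in probability (resp. almost surely) when $N_{tot}\to+\infty$, where $N_{tot}$ is the total cost of the subset $W$-aggregation procedure.
   Context: Setting: $\mathbf{X}=(X_1,\dots,X_p)$, $Y=f(\mathbf{X})$ with $f\in L^2(\mathbb{P}_\mathbf{X})$. $W_u$ denotes either $V_u=\mathrm{Var}(\mathrm{E}(Y|\mathbf{X}_u))$ or $E_u=\mathrm{E}(\mathrm{Var}(Y|\mathbf{X}_{-u}))$ ($-u=[1:p]\setminus u$), with $W_\emptyset=0$, $W_{[1:p]}=\mathrm{Var}(Y)$ known. Shapley effects: $\eta_i=\frac{1}{p\mathrm{Var}(Y)}\sum_{u\subset -i}\binom{p-1}{|u|}^{-1}(W_{u\cup\{i\}}-W_u)$. Subset $W$-aggregation procedure: compute each $\widehat W_u$ once and set $\widehat\eta_i=\frac{1}{p\mathrm{Var}(Y)}\sum_{u\subset -i}\binom{p-1}{|u|}^{-1}(\widehat W_{u\cup\{i\}}-\widehat W_u)$. The cost is the number of evaluations of $f$. *)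

From HB Require Import structures.
From mathcomp Require Import all_boot all_order all_algebra.
From mathcomp Require Import all_classical all_reals all_analysis.
Set Implicit Arguments. Unset Strict Implicit. Unset Printing Implicit Defensive.
Import Order.TTheory GRing.Theory Num.Theory.
Import numFieldNormedType.Exports.
Local Open Scope classical_set_scope.
Local Open Scope ring_scope.

Definition fset0 (p : nat) : {set 'I_p} := finset.set0.
Definition fsetT (p : nat) : {set 'I_p} := finset.setTfor 'I_p.

(* Round = nearest integer (halves rounded up), for nonnegative arguments. *)
Definition round_nat (R : realType) (x : R) : nat := Num.truncn (x + 2^-1).

Definition cvg_in_prob (d : measure_display) (T : measurableType d)
  (R : realType) (P : probability T R) (X : nat -> T -> R) (Y : T -> R) : Prop :=
  forall eps : R, 0 < eps ->
    (fun n => P [set w | eps <= `|X n w - Y w|]) @ \oo --> 0%E.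

Definition cvg_as (d : measure_display) (T : measurableType d)
  (R : realType) (P : probability T R) (X : nat -> T -> R) (Y : T -> R) : Prop :=
  {ae P, forall w, (fun n => X n w) @ \oo --> Y w}.

(* Shapley effect eta_i computed from a set function W (W set0 = 0, W (fsetT p) = Var Y). *)
Definition shapley (R : realType) (p : nat) (W : {set 'I_p} -> R) (i : 'I_p) : R :=
  (p%:R * W (fsetT p))^-1 *
  \sum_(u : {set 'I_p} | i \notin u) ('C(p.-1, #|u|)%:R)^-1 * (W (i |: u) - W u).

Definition Nstar (R : realType) (p : nat) (kappa : R) (Ntot : nat) (u : {set 'I_p}) : nat :=
  round_nat (Ntot%:R / (kappa * 'C(p, #|u|)%:R * (p.-1)%:R)).

Definition What_agg (T : Type) (R : realType) (p : nat) (VarY : R) (kappa : R)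
  (What : {set 'I_p} -> nat -> T -> R) (Ntot : nat) (u : {set 'I_p}) (w : T) : R :=
  if u == fset0 p then 0
  else if u == fsetT p then VarY
  else What u (Nstar kappa Ntot u) w.

Definition shapley_hat (T : Type) (R : realType) (p : nat) (VarY kappa : R)
  (What : {set 'I_p} -> nat -> T -> R) (i : 'I_p) (Ntot : nat) (w : T) : R :=
  shapley (fun u => What_agg VarY kappa What Ntot u w) i.

(* Once Var Y is fixed, a Shapley effect is a linear combination of the values
   W_u, so |hat eta_i - eta_i| <= K * sum_u |hat W_u - W_u|.  The empty and full
   sets are estimated exactly, and every other N_u^* is a rounding of a positive
   multiple of N_tot, hence tends to infinity with N_tot, so each hat W_u
   converges.  Both convergence in probability (by a union bound) and almost
   sure convergence survive finite sums of errors and such a domination. *)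

From HB Require Import structures.
From mathcomp Require Import all_boot all_order all_algebra.
From mathcomp Require Import all_classical all_reals all_analysis.
From mathcomp Require Import ring.
Import Order.TTheory GRing.Theory Num.Theory.
Import numFieldNormedType.Exports.
Local Open Scope classical_set_scope.
Local Open Scope ring_scope.
Set Implicit Arguments. Unset Strict Implicit.

Lemma sum_fun_ind (T U : Type) (V : zmodType) (M : (nat -> T -> V) -> (U -> V) -> Prop)
    (I : Type) (r : seq I) (X : I -> nat -> T -> V) (Y : I -> U -> V) :
  M (fun _ _ => 0) (fun=> 0) ->
  (forall i X' Y', M X' Y' -> M (fun n w => X i n w + X' n w) (fun w => Y i w + Y' w)) ->
  M (fun n w => \sum_(i <- r) X i n w) (fun w => \sum_(i <- r) Y i w).
Proof.
move=> M0 MD; elim: r => [|i r IHr].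
  have -> : (fun n w => \sum_(i <- [::]) X i n w) = fun _ _ => 0.
    by apply/funext => n; apply/funext => w; rewrite big_nil.
  have -> : (fun w => \sum_(i <- [::]) Y i w) = fun=> 0.
    by apply/funext => w; rewrite big_nil.
  exact: M0.
have -> : (fun n w => \sum_(j <- i :: r) X j n w) =
    fun n w => X i n w + \sum_(j <- r) X j n w.
  by apply/funext => n; apply/funext => w; rewrite big_cons.
have -> : (fun w => \sum_(j <- i :: r) Y j w) = fun w => Y i w + \sum_(j <- r) Y j w.
  by apply/funext => w; rewrite big_cons.
exact: MD.
Qed.

Section ConvergenceModes.
Context {d : measure_display} {T : measurableType d} {R : realType}.
Variable P : probability T R.
Implicit Types (X Z : nat -> T -> R) (Y : T -> R).

Lemma measurable_normB (f g : T -> R) :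
  measurable_fun setT f -> measurable_fun setT g ->
  measurable_fun setT (fun w => `|f w - g w|).
Proof.
move=> mf mg; apply: measurableT_comp; first exact: measurable_realfun.normr_measurable.
exact: measurable_realfun.measurable_funB.
Qed.

Lemma measurable_normB_ge (f g : T -> R) (e : R) :
  measurable_fun setT f -> measurable_fun setT g ->
  measurable [set w | e <= `|f w - g w|].
Proof.
move=> mf mg; have := measurable_normB mf mg measurableT (measurable_itv `[e, +oo[).
by rewrite setTI; congr measurable; apply/seteqP; split=> w /=; rewrite in_itv /= andbT.
Qed.

Lemma cvg_in_prob_refl Y : cvg_in_prob P (fun=> Y) Y.
Proof.
move=> eps eps_gt0; suff -> : [set w | eps <= `|Y w - Y w|] = set0.
  by rewrite measure0; exact: cvg_cst.
by apply/seteqP; split=> w //=; rewrite subrr normr0 leNgt eps_gt0.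
Qed.

Lemma cvg_in_prob_comp X Y (N : nat -> nat) :
  N n @[n --> \oo] --> \oo -> cvg_in_prob P X Y -> cvg_in_prob P (X \o N) Y.
Proof. by move=> N_oo XY eps eps_gt0; exact: cvg_comp N_oo (XY eps eps_gt0). Qed.

Lemma cvg_in_prob_normB X Y :
  cvg_in_prob P X Y -> cvg_in_prob P (fun n w => `|X n w - Y w|) (fun=> 0).
Proof.
move=> XY eps eps_gt0.
rewrite (eq_cvg _ _ (g := fun n => P [set w | eps <= `|X n w - Y w|])); first exact: XY.
by move=> n /=; congr (P _); apply: eq_set => w; rewrite subr0 normr_id.
Qed.

Lemma cvg_in_prob_add X1 Y1 X2 Y2 :
  (forall n, measurable_fun setT (X1 n)) -> measurable_fun setT Y1 ->
  (forall n, measurable_fun setT (X2 n)) -> measurable_fun setT Y2 ->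
  cvg_in_prob P X1 Y1 -> cvg_in_prob P X2 Y2 ->
  cvg_in_prob P (fun n w => X1 n w + X2 n w) (fun w => Y1 w + Y2 w).
Proof.
move=> mX1 mY1 mX2 mY2 XY1 XY2 eps eps_gt0.
have eps2_gt0 : 0 < eps / 2 by rewrite divr_gt0.
pose A1 n := [set w | eps / 2 <= `|X1 n w - Y1 w|].
pose A2 n := [set w | eps / 2 <= `|X2 n w - Y2 w|].
apply: (@squeeze_cvge _ _ _ _ (fun=> 0%E) _ (fun n => P (A1 n) + P (A2 n))%E).
- apply: nearW => n; rewrite measure_ge0 /=.
  have mA1 : measurable (A1 n) by exact: measurable_normB_ge.
  have mA2 : measurable (A2 n) by exact: measurable_normB_ge.
  apply: le_trans (measureU2 _ mA1 mA2).
  apply: le_measure; rewrite ?inE; [|exact: measurableU|].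
    by apply: measurable_normB_ge; exact: measurable_realfun.measurable_funD.
  move=> w /= le_eps; rewrite /A1 /A2 /=.
  have [|lt1] := leP (eps / 2) `|X1 n w - Y1 w|; first by left.
  right; rewrite leNgt; apply/negP => lt2; move: le_eps; apply/negP; rewrite -ltNge.
  rewrite opprD addrACA; apply: le_lt_trans (ler_normD _ _) _.
  by rewrite [eps]splitr ltrD.
- exact: cvg_cst.
- by rewrite -[0%E]adde0; apply: cvgeD; [|exact: XY1|exact: XY2].
Qed.

Lemma cvg_in_prob_sum (I : Type) (r : seq I) (X : I -> nat -> T -> R) (Y : I -> T -> R) :
  (forall i n, measurable_fun setT (X i n)) -> (forall i, measurable_fun setT (Y i)) ->
  (forall i, cvg_in_prob P (X i) (Y i)) ->
  cvg_in_prob P (fun n w => \sum_(i <- r) X i n w) (fun w => \sum_(i <- r) Y i w).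
Proof.
move=> mX mY XY.
pose M X' Y' := [/\ forall n, measurable_fun setT (X' n), measurable_fun setT Y'
                  & cvg_in_prob P X' Y'].
suff [] : M (fun n w => \sum_(i <- r) X i n w) (fun w => \sum_(i <- r) Y i w) by [].
apply: sum_fun_ind => [|i X' Y' [mX' mY' XY']].
  by split; [move=> n; exact: measurable_cst|exact: measurable_cst|exact: cvg_in_prob_refl].
split; [move=> n| |exact: cvg_in_prob_add].
  exact: measurable_realfun.measurable_funD.
exact: measurable_realfun.measurable_funD.
Qed.

Lemma cvg_in_prob_le X Y Z (K : R) :
  (forall n, measurable_fun setT (X n)) -> measurable_fun setT Y ->
  (forall n, measurable_fun setT (Z n)) ->
  (forall n w, `|X n w - Y w| <= K * Z n w) ->
  cvg_in_prob P Z (fun=> 0) -> cvg_in_prob P X Y.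
Proof.
move=> mX mY mZ XZ Z0 eps eps_gt0.
have K1_gt0 : 0 < `|K| + 1 by rewrite ltr_wpDl.
apply: (@squeeze_cvge _ _ _ _ (fun=> 0%E) _
  (fun n => P [set w | eps / (`|K| + 1) <= `|Z n w - 0|])).
- apply: nearW => n; rewrite measure_ge0 /=.
  apply: le_measure; rewrite ?inE; [exact: measurable_normB_ge| |].
    by apply: measurable_normB_ge => //; exact: measurable_cst.
  move=> w /= le_eps; rewrite subr0 ler_pdivrMr // (le_trans le_eps) //.
  apply: le_trans (XZ n w) _; apply: le_trans (ler_norm (K * Z n w)) _.
  by rewrite normrM mulrC ler_wpM2l // lerDl.
- exact: cvg_cst.
- exact: Z0 (divr_gt0 eps_gt0 K1_gt0).
Qed.

Lemma cvg_in_prob_le_sum (I : Type) (r : seq I) X Y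
    (Xs : I -> nat -> T -> R) (Ys : I -> T -> R) (K : R) :
  (forall n, measurable_fun setT (X n)) -> measurable_fun setT Y ->
  (forall i n, measurable_fun setT (Xs i n)) -> (forall i, measurable_fun setT (Ys i)) ->
  (forall n w, `|X n w - Y w| <= K * \sum_(i <- r) `|Xs i n w - Ys i w|) ->
  (forall i, cvg_in_prob P (Xs i) (Ys i)) -> cvg_in_prob P X Y.
Proof.
move=> mX mY mXs mYs XK XYs; apply: cvg_in_prob_le mX mY _ XK _.
  by move=> n; apply: measurable_sum => i; exact: measurable_normB.
have -> : (fun=> 0) = fun w : T => \sum_(i <- r) (0 : R) by apply/funext => w; rewrite big1.
apply: cvg_in_prob_sum => [i n|i|i]; last exact: cvg_in_prob_normB.
  exact: measurable_normB.
exact: measurable_cst.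
Qed.

Lemma cvg_as_refl Y : cvg_as P (fun=> Y) Y.
Proof. by apply: nearW => w; exact: cvg_cst. Qed.

Lemma cvg_as_comp X Y (N : nat -> nat) :
  N n @[n --> \oo] --> \oo -> cvg_as P X Y -> cvg_as P (X \o N) Y.
Proof. by move=> N_oo; apply: filterS => w XYw; exact: cvg_comp N_oo XYw. Qed.

Lemma cvg_as_normB X Y :
  cvg_as P X Y -> cvg_as P (fun n w => `|X n w - Y w|) (fun=> 0).
Proof.
apply: filterS => w XYw; rewrite -(normr0 R) -(subrr (Y w)).
exact: cvg_norm (cvgB XYw (cvg_cst _)).
Qed.

Lemma cvg_as_add X1 Y1 X2 Y2 :
  cvg_as P X1 Y1 -> cvg_as P X2 Y2 ->
  cvg_as P (fun n w => X1 n w + X2 n w) (fun w => Y1 w + Y2 w).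
Proof. by apply: filterS2 => w XY1 XY2; exact: cvgD. Qed.

Lemma cvg_as_sum (I : Type) (r : seq I) (X : I -> nat -> T -> R) (Y : I -> T -> R) :
  (forall i, cvg_as P (X i) (Y i)) ->
  cvg_as P (fun n w => \sum_(i <- r) X i n w) (fun w => \sum_(i <- r) Y i w).
Proof.
move=> XY; apply: sum_fun_ind => [|i X' Y']; first exact: cvg_as_refl.
exact: cvg_as_add.
Qed.

Lemma cvg_as_le X Y Z (K : R) :
  (forall n w, `|X n w - Y w| <= K * Z n w) ->
  cvg_as P Z (fun=> 0) -> cvg_as P X Y.
Proof.
move=> XZ; apply: filterS => w Z0.
have KZ0 : K * Z n w @[n --> \oo] --> 0 by rewrite -(mulr0 K); exact: cvgM (cvg_cst _) Z0.
apply: (squeeze_cvgr (f := fun n => Y w - K * Z n w) (h := fun n => Y w + K * Z n w)).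
- by apply: nearW => n; rewrite -ler_distl XZ.
- by rewrite -[X in _ --> X]subr0; apply: cvgB => //; exact: cvg_cst.
- by rewrite -[X in _ --> X]addr0; apply: cvgD => //; exact: cvg_cst.
Qed.

Lemma cvg_as_le_sum (I : Type) (r : seq I) X Y
    (Xs : I -> nat -> T -> R) (Ys : I -> T -> R) (K : R) :
  (forall n w, `|X n w - Y w| <= K * \sum_(i <- r) `|Xs i n w - Ys i w|) ->
  (forall i, cvg_as P (Xs i) (Ys i)) -> cvg_as P X Y.
Proof.
move=> XK XYs; apply: cvg_as_le XK _.
have -> : (fun=> 0) = fun w : T => \sum_(i <- r) (0 : R) by apply/funext => w; rewrite big1.
by apply: cvg_as_sum => i; exact: cvg_as_normB.
Qed.

End ConvergenceModes.

Lemma round_nat_div_cvgy (R : realType) (a : R) :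
  0 < a -> round_nat (n%:R / a) @[n --> \oo] --> \oo.
Proof.
move=> a_gt0; apply/cvgnyPgey; apply: nearW => A.
apply: filterS (nbhs_infty_ge (Num.truncn (A%:R * a)).+1) => n le_n.
rewrite /round_nat truncn_ge_nat; last by rewrite addr_ge0 // divr_ge0 // ltW.
have : A%:R * a <= n%:R by apply/ltW/(lt_le_trans (truncnS_gt _)); rewrite ler_nat.
by rewrite -ler_pdivlMr // => /le_trans; apply; rewrite lerDl invr_ge0.
Qed.

Section ShapleyEffects.
Context {R : realType} {p : nat}.

Lemma shapley_lipschitz (W : {set 'I_p} -> R) (i : 'I_p) :
  exists K : R, forall Z, Z (fsetT p) = W (fsetT p) ->
    `|shapley Z i - shapley W i| <= K * \sum_v `|Z v - W v|.
Proof.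
exists (`|(p%:R * W (fsetT p))^-1| *
        \sum_(u : {set 'I_p} | i \notin u) ('C(p.-1, #|u|)%:R)^-1 *+ 2) => Z ZT.
set S := \sum_v `|Z v - W v|.
have le_S v : `|Z v - W v| <= S by rewrite /S (bigD1 v) //= lerDl sumr_ge0.
have le_incr u : `|(Z (i |: u) - Z u) - (W (i |: u) - W u)| <= S *+ 2.
  have -> : (Z (i |: u) - Z u) - (W (i |: u) - W u) =
            (Z (i |: u) - W (i |: u)) - (Z u - W u) by ring.
  by apply: le_trans (ler_normB _ _) _; rewrite mulr2n lerD.
rewrite /shapley ZT -mulrBr -sumrB normrM -mulrA; apply: ler_wpM2l => //.
rewrite mulr_suml; apply: le_trans (ler_norm_sum _ _ _) _; apply: ler_sum => u _.
rewrite -mulrBr normrM ger0_norm ?invr_ge0 // mulrnAl -mulrnAr.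
by apply: ler_wpM2l; rewrite ?invr_ge0.
Qed.

Lemma measurable_shapley (d : measure_display) (T : measurableType d)
    (Z : {set 'I_p} -> T -> R) (c : R) (i : 'I_p) :
  (forall w, Z (fsetT p) w = c) -> (forall u, measurable_fun setT (Z u)) ->
  measurable_fun setT (fun w => shapley (Z ^~ w) i).
Proof.
move=> ZT mZ; rewrite /shapley; under eq_fun do rewrite ZT big_mkcond.
apply: measurable_realfun.measurable_funM; first exact: measurable_cst.
apply: measurable_sum => u; case: (i \notin u); last exact: measurable_cst.
apply: measurable_realfun.measurable_funM; first exact: measurable_cst.
exact: measurable_realfun.measurable_funB.
Qed.

End ShapleyEffects.

Section SubsetAggregation.
Context {R : realType} {p : nat}.
Variables (W : {set 'I_p} -> R) (kappa : R).
Hypotheses (p_ge2 : (2 <= p)%N) (kappa_gt0 : 0 < kappa) (W0 : W (fset0 p) = 0).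

Lemma fsetT_neq0 : fsetT p != fset0 p.
Proof. by apply/eqP => /setP/(_ (Ordinal (ltnW p_ge2))); rewrite /fsetT /fset0 !inE. Qed.

Lemma What_agg_fsetT (T : Type) (What : {set 'I_p} -> nat -> T -> R) N w :
  What_agg (W (fsetT p)) kappa What N (fsetT p) w = W (fsetT p).
Proof. by rewrite /What_agg (negbTE fsetT_neq0) eqxx. Qed.

Lemma Nstar_cvgy (u : {set 'I_p}) : Nstar kappa N u @[N --> \oo] --> \oo.
Proof.
apply: round_nat_div_cvgy; rewrite !mulr_gt0 // ltr0n ?ltn_predRL //.
by rewrite bin_gt0 -[X in (_ <= X)%N]card_ord max_card.
Qed.

Lemma What_agg_cvg (T : Type) (What : {set 'I_p} -> nat -> T -> R)
    (M : (nat -> T -> R) -> (T -> R) -> Prop) :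
  (forall Y, M (fun=> Y) Y) ->
  (forall X Y (N : nat -> nat), N n @[n --> \oo] --> \oo -> M X Y -> M (X \o N) Y) ->
  (forall u, u != fset0 p -> u != fsetT p -> M (What u) (fun=> W u)) ->
  forall u, M (fun N => What_agg (W (fsetT p)) kappa What N u) (fun=> W u).
Proof.
move=> M_refl M_comp cvgW u; rewrite /What_agg.
have [->|u_neq0] := eqVneq u (fset0 p); first by rewrite W0; exact: M_refl.
have [->|u_neqT] := eqVneq u (fsetT p); first exact: M_refl.
exact: M_comp (Nstar_cvgy u) (cvgW u u_neq0 u_neqT).
Qed.

Lemma measurable_What_agg (d : measure_display) (T : measurableType d)
    (What : {set 'I_p} -> nat -> T -> R) N u :
  (forall u N, measurable_fun setT (What u N)) ->
  measurable_fun setT (What_agg (W (fsetT p)) kappa What N u).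
Proof.
move=> mWhat; rewrite /What_agg; case: (u == fset0 p); first exact: measurable_cst.
by case: (u == fsetT p); [exact: measurable_cst|exact: mWhat].
Qed.

End SubsetAggregation.

Theorem proposition4 (d : measure_display) (T : measurableType d) (R : realType)
  (P : probability T R) (p : nat) (W : {set 'I_p} -> R) (kappa : R)
  (What : {set 'I_p} -> nat -> T -> R) :
  (2 <= p)%N -> 0 < kappa -> W (fset0 p) = 0 -> 0 < W (fsetT p) ->
  (forall u N, measurable_fun setT (What u N)) ->
  ((forall u : {set 'I_p}, u != fset0 p -> u != fsetT p ->
      cvg_in_prob P (What u) (fun _ => W u)) ->
   forall i : 'I_p,
      cvg_in_prob P (shapley_hat (W (fsetT p)) kappa What i) (fun _ => shapley W i))
  /\
  ((forall u : {set 'I_p}, u != fset0 p -> u != fsetT p ->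
      cvg_as P (What u) (fun _ => W u)) ->
   forall i : 'I_p,
      cvg_as P (shapley_hat (W (fsetT p)) kappa What i) (fun _ => shapley W i)).
Proof.
move=> p_ge2 kappa_gt0 W0 _ mWhat.
have le_K i : exists K, forall N w,
    `|shapley_hat (W (fsetT p)) kappa What i N w - shapley W i| <=
    K * \sum_v `|What_agg (W (fsetT p)) kappa What N v w - W v|.
  have [K le_K] := shapley_lipschitz W i.
  by exists K => N w; apply: le_K; exact: What_agg_fsetT.
split=> cvgW i; have [K {}le_K] := le_K i.
  apply: cvg_in_prob_le_sum le_K _.
  - move=> N; apply: (measurable_shapley (c := W (fsetT p))) => [w|u].
      exact: What_agg_fsetT.
    exact: measurable_What_agg.
  - exact: measurable_cst.
  - by move=> v N; exact: measurable_What_agg.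
  - by move=> v; exact: measurable_cst.
  - move=> v; apply: What_agg_cvg => //; [exact: cvg_in_prob_refl|exact: cvg_in_prob_comp].
apply: cvg_as_le_sum le_K _ => v.
by apply: What_agg_cvg => //; [exact: cvg_as_refl|exact: cvg_as_comp].
Qed.
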